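(* Let $n\geq 6$ be an integer. Then for every real $x\in[3,n/2]$, $$n\frac{\sin(\pi x/n)}{\sin(\pi/n)}\geq x(n-x)+1.$$ *)

From Stdlib Require Import Reals Lra Lia.

(* With t = PI/n and s = PI x/n one has sin t < t and sin s >= s - s^3/6, so the
   left-hand side is at least n x - PI^2 x^3/(6 n).  Since x <= n/2 the cubic term is
   at most PI^2 x^2/12 < (5/6) x^2, and x >= 3 makes (1/6) x^2 >= 1. *)
From Stdlib Require Import Reals Lra.
Open Scope R_scope.

Lemma PI_le_315 : PI <= 3.15.
Proof.
destruct (PI_2_3_7_ineq 1) as [_ Hub].
unfold tg_alt, PI_2_3_7_tg, Ratan_seq in Hub; simpl in Hub; lra.
Qed.

Lemma sin_ge_cubic (a : R) : 0 <= a -> a <= PI -> a - a * a * a / 6 <= sin a.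
Proof.
intros Ha0 HaPI.
destruct (sin_bound a 0 Ha0 HaPI) as [Hlb _].
unfold sin_approx, sin_term in Hlb; simpl in Hlb; lra.
Qed.

Lemma div_le_div_sin (s t : R) : 0 <= s -> 0 < t -> t < PI -> s / t <= s / sin t.
Proof.
intros Hs Ht0 HtPI.
assert (Hsin : 0 < sin t) by (apply sin_gt_0; lra).
apply Rmult_le_compat_l; [exact Hs|].
apply Rinv_le_contravar; [exact Hsin|].
left; apply sin_lt_x; exact Ht0.
Qed.

Lemma sin_ratio_ge (N x : R) : 1 < N -> 0 <= x -> x <= N ->
  N * x - PI * PI * x * x * x / (6 * N) <= N * (sin (PI * x / N) / sin (PI / N)).
Proof.
intros HN Hx0 HxN.
pose proof PI_RGT_0 as HPI.
set (s := PI * x / N); set (t := PI / N).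
assert (Ht0 : 0 < t) by (unfold t; apply Rdiv_lt_0_compat; lra).
assert (HtPI : t < PI).
{ unfold t; apply (Rmult_lt_reg_r N); [lra|].
  unfold Rdiv; rewrite Rmult_assoc, Rinv_l by lra; nra. }
assert (Hs0 : 0 <= s) by (unfold s; apply Rmult_le_pos; [nra | left; apply Rinv_0_lt_compat; lra]).
assert (HsPI : s <= PI).
{ unfold s; apply (Rmult_le_reg_r N); [lra|].
  unfold Rdiv; rewrite Rmult_assoc, Rinv_l by lra; nra. }
assert (Hcubic : N * x - PI * PI * x * x * x / (6 * N) = N * ((s - s * s * s / 6) / t))
  by (unfold s, t; field; lra).
rewrite Hcubic.
apply Rmult_le_compat_l; [lra|].
apply Rle_trans with (sin s / t).
- unfold Rdiv; apply Rmult_le_compat_r; [left; apply Rinv_0_lt_compat; exact Ht0|].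
  apply sin_ge_cubic; assumption.
- apply div_le_div_sin; [apply sin_ge_0 | |]; assumption.
Qed.

Lemma cubic_defect_le (N x : R) : 3 <= x -> x <= N / 2 ->
  PI * PI * x * x * x / (6 * N) <= x * x - 1.
Proof.
intros Hx3 HxN.
pose proof PI_le_315 as HPIub; pose proof PI_RGT_0 as HPI.
assert (HN : 0 < N) by lra.
assert (HPI2 : PI * PI <= 10) by nra.
apply (Rmult_le_reg_r (6 * N)); [lra|].
unfold Rdiv; rewrite Rmult_assoc, Rinv_l by lra.
assert (Hx2 : 9 <= x * x) by nra.
assert (Hsq : PI * PI * (x * x) <= 10 * (x * x)) by nra.
nra.
Qed.

Theorem lemma5p1 (n : nat) (Hn : (6 <= n)%nat) (x : R)
  (Hx1 : 3 <= x) (Hx2 : x <= INR n / 2) :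
  INR n * (sin (PI * x / INR n) / sin (PI / INR n)) >= x * (INR n - x) + 1.
Proof.
assert (HN : 6 <= INR n) by (replace 6 with (INR 6) by (simpl; lra); apply le_INR; exact Hn).
pose proof (sin_ratio_ge (INR n) x ltac:(lra) ltac:(lra) ltac:(lra)) as Hratio.
pose proof (cubic_defect_le (INR n) x Hx1 Hx2) as Hdefect.
lra.
Qed.
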